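(* Let $\mu$ be a probability measure on $\mathrm{Homeo}_+(\mathbb{R})$ with finite or countable support. If there exists $\varepsilon>0$ such that $\phi_+(x)\ge\varepsilon$ for all $x\in\mathbb{R}$, then $\phi_+\equiv 1$. Symmetrically, if there exists $\varepsilon>0$ such that $\phi_-(x)\ge\varepsilon$ for all $x\in\mathbb{R}$, then $\phi_-\equiv1$.
   Context: Setup. Let $\mu$ be a probability measure on the group $\mathrm{Homeo}_+(\mathbb{R})$ of orientation-preserving homeomorphisms of $\mathbb{R}$, supported on a finite or countable set $\{f_1,f_2,\dots\}$ with $p_i=\mu(\{f_i\})>0$, $\sum_i p_i=1$. Let $g_1,g_2,\dots$ be i.i.d. random maps with law $\mu$, and set $F_0=\mathrm{id}$, $F_n=g_n\circ\cdots\circ g_1$. For $x\in\mathbb{R}$ let $\phi_+(x)=\mathbb{P}(\lim_n F_n(x)=+\infty)$ and $\phi_-(x)=\mathbb{P}(\lim_n F_n(x)=-\infty)$. *)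

From HB Require Import structures.
From mathcomp Require Import all_boot all_order all_algebra.
From mathcomp Require Import all_classical all_reals all_analysis.
Set Implicit Arguments. Unset Strict Implicit. Unset Printing Implicit Defensive.
Import Order.TTheory GRing.Theory Num.Theory numFieldNormedType.Exports.
Local Open Scope classical_set_scope.
Local Open Scope ring_scope.

Definition homeo_plus (R : realType) (f : R -> R) : Prop :=
  (exists g : R -> R, cancel f g /\ cancel g f /\ continuous f /\ continuous g)
  /\ {homo f : x y / x < y}.

(* F t n = g_n o ... o g_1 evaluated along the sample t, where the
   i.i.d. maps are g_{k+1} = f (G k t). F 0 = id. *)
Fixpoint Fwalk (R : realType) (I T : Type) (f : I -> R -> R)
    (G : nat -> T -> I) (t : T) (n : nat) (x : R) : R :=
  match n with
  | 0 => x
  | n'.+1 => f (G n' t) (Fwalk f G t n' x)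
  end.

(* (G n)_n is an i.i.d. sequence with law p on the index set I:
   every initial segment has the product joint law. *)
Definition iid_with_law (d : measure_display) (T : measurableType d)
    (R : realType) (P : probability T R) (I : Type) (p : I -> R)
    (G : nat -> T -> I) : Prop :=
  (forall n (i : I), measurable (G n @^-1` [set i])) /\
  (forall (n : nat) (s : nat -> I),
     P [set t | forall k, (k < n)%N -> G k t = s k]
       = ((\prod_(k < n) p (s k))%:E)%E).

Definition phi_plus (d : measure_display) (T : measurableType d)
    (R : realType) (P : probability T R) (I : Type) (f : I -> R -> R)
    (G : nat -> T -> I) (x : R) : \bar R :=
  P [set t | (fun n => Fwalk f G t n x) @ \oo --> +oo].

Definition phi_minus (d : measure_display) (T : measurableType d)
    (R : realType) (P : probability T R) (I : Type) (f : I -> R -> R)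
    (G : nat -> T -> I) (x : R) : \bar R :=
  P [set t | (fun n => Fwalk f G t n x) @ \oo --> -oo].

From HB Require Import structures.
From mathcomp Require Import all_boot all_order all_algebra.
From mathcomp Require Import all_classical all_reals all_analysis.
From mathcomp Require Import zify.
Import Order.TTheory GRing.Theory Num.Theory numFieldNormedType.Exports.
Set Implicit Arguments. Unset Strict Implicit. Unset Printing Implicit Defensive.
Local Open Scope classical_set_scope.
Local Open Scope ring_scope.

(* Write A_x for the event that the walk F_n(x) tends to +oo.  We work on path
   space: a sample t determines the path of indices (G k t)_k, and A_x is an
   event on paths.  The only probabilistic input is the Markov property of the
   i.i.d. sequence: for an event E on paths, "E holds for the path observed
   from time n on" is independent of each cylinder {G_k = s_k, k < n} and has
   the probability of E.  It holds for events determined by finitely many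
   indices (decompose over the countably many values of these indices, using
   the product rule) and is preserved by monotone countable unions and
   intersections; A_x is built from finite-dimensional events in this way.

   If P(A_y) >= eps for all y, then conditionally on a cylinder of length K
   the walk restarts from F_K(x), so P(A_x & D) >= eps P(D) for every event D
   determined by the first K steps, and by monotone limits for
   D = "F_n(x) <= M for some n >= N".  Letting N -> oo, eps times the
   probability that F_n(x) <= M infinitely often is bounded by the
   probability of A_x & "F_n(x) <= M infinitely often", which is 0.  So the
   complement of A_x is null.  The statement for phi_-
   follows by conjugating every map by x |-> -x. *)

Section CountableUnion.
Variables (d : measure_display) (T : measurableType d) (R : realType)
  (P : probability T R).
Local Open Scope ereal_scope.

(* A family indexed by a countable type, re-indexed by the codes of its
   elements (and empty at the other naturals), so that the nat-indexed
   countable additivity of the library applies. *)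
Definition coded_family (J : countType) (B : J -> set T) (n : nat) : set T :=
  if @pickle_inv J n is Some j then B j else set0.

Lemma bigcup_coded_family (J : countType) (B : J -> set T) :
  \bigcup_(j in [set: J]) B j = \bigcup_n coded_family B n.
Proof.
apply/seteqP; split => t /=.
- by move=> [j _ Bjt]; exists (pickle j) => //; rewrite /coded_family pickleK_inv.
- by move=> [n _]; rewrite /coded_family; case: pickle_inv => [j|]// Bjt; exists j.
Qed.

Lemma measure_bigcup_count (J : countType) (B : J -> set T) :
  (forall j, measurable (B j)) -> trivIset setT B ->
  P (\bigcup_(j in [set: J]) B j) = \sum_(n <oo) P (coded_family B n).
Proof.
move=> mB tB; have tBn : trivIset setT (coded_family B).
  move=> m n _ _; rewrite /coded_family.
  case Em: pickle_inv => [i|]; last by rewrite set0I => -[].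
  case En: pickle_inv => [j|]; last by rewrite setI0 => -[].
  move=> /(tB i j I I) ij; subst j.
  by move: (@pickle_invK J m) (@pickle_invK J n); rewrite Em En /= => <- <-.
rewrite bigcup_coded_family measure_bigcup //; last first.
  by move=> n _; rewrite /coded_family; case: pickle_inv.
by apply: eq_eseriesl => n; rewrite in_setT.
Qed.

Lemma le_measure_bigcup_count (J : countType) (B C : J -> set T) (c : R) :
  (forall j, measurable (B j)) -> (forall j, measurable (C j)) ->
  trivIset setT B -> trivIset setT C -> (0 <= c)%R ->
  (forall j, c%:E * P (C j) <= P (B j)) ->
  c%:E * P (\bigcup_(j in [set: J]) C j) <= P (\bigcup_(j in [set: J]) B j).
Proof.
move=> mB mC tB tC c0 leCB; rewrite !measure_bigcup_count // -nneseriesZl //.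
apply: lee_nneseries => [n _ _|n _]; first by rewrite mule_ge0.
by rewrite /coded_family; case: pickle_inv => [j|]; rewrite ?measure0 ?mule0.
Qed.

Lemma eq_measure_bigcup_count (J : countType) (B C : J -> set T) (c : R) :
  (forall j, measurable (B j)) -> (forall j, measurable (C j)) ->
  trivIset setT B -> trivIset setT C -> (0 <= c)%R ->
  (forall j, P (B j) = c%:E * P (C j)) ->
  P (\bigcup_(j in [set: J]) B j) = c%:E * P (\bigcup_(j in [set: J]) C j).
Proof.
move=> mB mC tB tC c0 eqBC; rewrite !measure_bigcup_count // -nneseriesZl //.
apply: eq_eseriesr => n _.
by rewrite /coded_family; case: pickle_inv => [j|]; rewrite ?measure0 ?mule0.
Qed.

End CountableUnion.

Section PathSpace.
Variable I : Type.

Definition pshift (n : nat) (w : nat -> I) : nat -> I := fun k => w (k + n)%N.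

Lemma pshift0 (w : nat -> I) : pshift 0%N w = w.
Proof. by apply/funext => k; rewrite /pshift addn0. Qed.

Definition depends_on (K : nat) (E : (nat -> I) -> Prop) : Prop :=
  forall w w', (forall k, (k < K)%N -> w k = w' k) -> E w -> E w'.

End PathSpace.

Section MarkovProperty.
Variables (d : measure_display) (T : measurableType d) (R : realType)
  (P : probability T R) (I : countType) (p : I -> R) (G : nat -> T -> I).
Hypothesis iidG : iid_with_law P p G.
Variable i0 : I.
Local Open Scope ereal_scope.

Definition path_of (t : T) : nat -> I := fun k => G k t.

Definition cyl (n : nat) (s : nat -> I) : set T :=
  [set t | forall k, (k < n)%N -> G k t = s k].

Definition after (n : nat) (E : (nat -> I) -> Prop) : set T :=
  [set t | E (pshift n (path_of t))].

Definition markov_event (E : (nat -> I) -> Prop) : Prop :=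
  forall n s, measurable (cyl n s `&` after n E) /\
    P (cyl n s `&` after n E) = P (cyl n s) * P (after 0%N E).

Lemma cyl0 (s : nat -> I) : cyl 0%N s = setT.
Proof. by apply/seteqP; split => t. Qed.

Lemma cyl_measurable n s : measurable (cyl n s).
Proof.
elim: n => [|n IH]; first by rewrite cyl0.
have -> : cyl n.+1 s = cyl n s `&` G n @^-1` [set s n].
  apply/seteqP; split => t /=.
    by move=> Hs; split; [move=> k kn; apply: Hs; rewrite ltnS ltnW | exact: Hs].
  by move=> [Hs Hn] k; rewrite ltnS leq_eqVlt => /orP[/eqP -> //|]; exact: Hs.
by apply: measurableI => //; exact: iidG.1.
Qed.

Lemma cylE n s : P (cyl n s) = (\prod_(k < n) p (s k))%:E.
Proof. exact: iidG.2. Qed.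

Lemma after0E E : after 0%N E = [set t | E (path_of t)].
Proof. by apply/seteqP; split => t; rewrite /after /= pshift0. Qed.

Lemma markov_event_measurable E : markov_event E -> measurable (after 0%N E).
Proof. by move=> /(_ 0%N (fun=> i0)) [+ _]; rewrite cyl0 setTI. Qed.

Definition splice (n : nat) (s : nat -> I) (u : seq I) : nat -> I :=
  fun k => if (k < n)%N then s k else nth i0 u (k - n).

Lemma cyl_splice n K s u t : size u = K ->
  cyl (n + K) (splice n s u) t <->
  cyl n s t /\ forall k, (k < K)%N -> G (k + n) t = nth i0 u k.
Proof.
move=> su; split.
  move=> Ht; split => [k kn|k kK]; rewrite Ht ?/splice ?kn //; try lia.
  by rewrite ifF ?addnK //; lia.
move=> [Hs Hu] k kn; rewrite /splice; case: ifPn => kn'; first exact: Hs.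
by rewrite -Hu ?subnK //; lia.
Qed.

Definition piece (n : nat) (s : nat -> I) (E : (nat -> I) -> Prop) (K : nat)
    (u : seq I) : set T :=
  if `[< size u = K /\ E (nth i0 u) >] then cyl (n + K) (splice n s u) else set0.

Lemma piece_measurable n s E K u : measurable (piece n s E K u).
Proof. by rewrite /piece; case: ifP => // _; exact: cyl_measurable. Qed.

Lemma piece_trivIset n s E K : trivIset setT (piece n s E K).
Proof.
move=> u v _ _; rewrite /piece.
case: asboolP => [[su _]|_]; last by rewrite set0I => -[].
case: asboolP => [[sv _]|_]; last by rewrite setI0 => -[].
move=> [t [/(cyl_splice _ _ _ su) [_ Hu] /(cyl_splice _ _ _ sv) [_ Hv]]].
apply: (@eq_from_nth _ i0); first by rewrite su sv.
by move=> k; rewrite su => kK; rewrite -Hu // -Hv.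
Qed.

Lemma bigcup_piece n s E K : depends_on K E ->
  cyl n s `&` after n E = \bigcup_(u in [set: seq I]) piece n s E K u.
Proof.
move=> dE; apply/seteqP; split => t /=.
  move=> [Hs HE]; set u := [seq G (k + n)%N t | k <- iota 0%N K].
  have Hu k : (k < K)%N -> nth i0 u k = G (k + n)%N t.
    by move=> kK; rewrite (nth_map 0%N) ?size_iota // nth_iota.
  have su : size u = K by rewrite size_map size_iota.
  exists u => //; rewrite /piece; case: asboolP => [_|[]].
    by apply/cyl_splice => //; split => // k kK; rewrite Hu.
  by split => //; apply: (dE _ _ _ HE) => k kK; rewrite Hu.
move=> [u _]; rewrite /piece; case: asboolP => [[su Eu]|_ //].
move=> /(cyl_splice _ _ _ su) [Hs Hu]; split => //.
by apply: (dE _ _ _ Eu) => k kK; rewrite /pshift /path_of Hu.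
Qed.

Lemma piece_measure n s E K u :
  P (piece n s E K u) = P (cyl n s) * P (piece 0%N s E K u).
Proof.
rewrite /piece; case: asboolP => [[su _]|_]; last by rewrite measure0 mule0.
rewrite !cylE -EFinM big_split_ord /=; congr ((_ * _)%R%:E).
  by apply: eq_bigr => k _; rewrite /splice ltn_ord.
by apply: eq_bigr => k _; rewrite /splice /= ifF ?addKn ?subn0 //; lia.
Qed.

Lemma markov_event_finite K E : depends_on K E -> markov_event E.
Proof.
move=> dE n s; rewrite (bigcup_piece n s dE); split.
  by apply: countable_bigcupT_measurable; [exact: countableP|exact: piece_measurable].
rewrite -[after 0%N E]setTI -(cyl0 s) (bigcup_piece 0%N s dE) cylE.
apply: eq_measure_bigcup_count; try exact: piece_measurable; try exact: piece_trivIset.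
  by rewrite -lee_fin -cylE.
by move=> u; rewrite piece_measure cylE.
Qed.

Lemma markov_event_lim (E : nat -> (nat -> I) -> Prop) E' :
  (forall m, markov_event (E m)) ->
  (forall n s, measurable (cyl n s `&` after n E') /\
     P (cyl n s `&` after n (E m)) @[m --> \oo] --> P (cyl n s `&` after n E')) ->
  markov_event E'.
Proof.
move=> mE limE n s; have mE' n' s' := (limE n' s').1; split => //.
have {}limE n' s' := (limE n' s').2.
have lim0 : P (after 0%N (E m)) @[m --> \oo] --> P (after 0%N E').
  by move: (limE 0%N s); rewrite cyl0; under eq_cvg do rewrite setTI; rewrite setTI.
have mE0 : measurable (after 0%N E') by have := mE' 0%N s; rewrite cyl0 setTI.
have fin A : measurable A -> P A \is a fin_num by exact: fin_num_measure.
have limP := cvgeM (mule_def_fin (fin _ (cyl_measurable n s)) (fin _ mE0))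
  (cvg_cst (P (cyl n s))) lim0.
have limPE : P (cyl n s `&` after n (E m)) @[m --> \oo] -->
             P (cyl n s) * P (after 0%N E').
  under eq_cvg do rewrite (mE _ n s).2.
  exact: limP.
exact: (cvg_unique (@ereal_hausdorff R) (limE n s) limPE).
Qed.

Lemma markov_event_bigcap (E : nat -> (nat -> I) -> Prop) :
  (forall m, markov_event (E m)) -> (forall m w, E m.+1 w -> E m w) ->
  markov_event (fun w => forall m, E m w).
Proof.
move=> mE decE; apply: (markov_event_lim mE) => n s.
have mF m : measurable (cyl n s `&` after n (E m)) by have [] := mE m n s.
have -> : cyl n s `&` after n (fun w => forall m, E m w) =
          \bigcap_m (cyl n s `&` after n (E m)).
  apply/seteqP; split => t /=; first by move=> [Hs HE] m _; split => //; exact: HE.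
  by move=> H; split; [exact: (H 0%N Logic.I).1 | move=> m; exact: (H m Logic.I).2].
split; first exact: bigcapT_measurable.
apply: nonincreasing_cvg_mu => //.
- by rewrite (le_lt_trans (probability_le1 P (mF 0%N))) ?ltry.
- by apply: bigcapT_measurable => m; exact: mF.
- by apply/nonincreasing_seqP => m; apply/subsetPset; apply: setIS => t; exact: decE.
Qed.

Lemma markov_event_bigcup (E : nat -> (nat -> I) -> Prop) :
  (forall m, markov_event (E m)) -> (forall m w, E m w -> E m.+1 w) ->
  markov_event (fun w => exists m, E m w).
Proof.
move=> mE incE; apply: (markov_event_lim mE) => n s.
have mF m : measurable (cyl n s `&` after n (E m)) by have [] := mE m n s.
have -> : cyl n s `&` after n (fun w => exists m, E m w) =
          \bigcup_m (cyl n s `&` after n (E m)).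
  apply/seteqP; split => t /=; first by move=> [Hs [m HE]]; exists m.
  by move=> [m _ [Hs HE]]; split => //; exists m.
split; first exact: bigcupT_measurable.
apply: nondecreasing_cvg_mu => //; first exact: bigcupT_measurable.
by apply/nondecreasing_seqP => m; apply/subsetPset; apply: setIS => t; exact: incE.
Qed.

Section Walk.
Variable f : I -> R -> R.

Definition walk (w : nat -> I) : nat -> R -> R :=
  Fwalk f (fun k (w' : nat -> I) => w' k) w.

Lemma Fwalk_path t n x : Fwalk f G t n x = walk (path_of t) n x.
Proof. by elim: n => //= n ->. Qed.

Lemma walk_shift w K m x : walk w (m + K) x = walk (pshift K w) m (walk w K x).
Proof. by rewrite /walk; elim: m => //= m ->. Qed.

Lemma walk_prefix w w' n x : (forall k, (k < n)%N -> w k = w' k) ->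
  walk w n x = walk w' n x.
Proof.
rewrite /walk; elim: n => //= n IH ww'.
by rewrite ww' // IH // => k kn; apply: ww'; exact: ltnW.
Qed.

Definition escapes (x : R) (w : nat -> I) : Prop :=
  walk w n x @[n --> \oo] --> +oo%R.

Lemma escapesP x w : escapes x w <->
  forall M : nat, exists N, forall n, (N <= n)%N -> (M%:R < walk w n x)%R.
Proof.
rewrite /escapes cvgryPgt; split.
  by move=> Hw M; have [N _ HN] := Hw M%:R; exists N => n; exact: HN.
move=> Hw A; have [M AM] : exists M : nat, (A < M%:R)%R by eexists; exact: truncnS_gt.
have [N HN] := Hw M; exists N => // n /= Nn; rewrite (lt_trans AM) //; exact: HN.
Qed.

Lemma escapes_shift x w K : escapes x w = escapes (walk w K x) (pshift K w).
Proof.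
rewrite /escapes -(cvg_shiftn K) /=.
by under eq_fun do rewrite walk_shift.
Qed.

Definition stays_above (x : R) (M N K : nat) (w : nat -> I) : Prop :=
  forall n, (N <= n)%N -> (n < K)%N -> (M%:R < walk w n x)%R.

Lemma escapesE x :
  escapes x = fun w => forall M, exists N, forall K, stays_above x M N K w.
Proof.
apply/funext => w; apply/propext; rewrite escapesP; split.
  by move=> Hw M; have [N HN] := Hw M; exists N => K n Nn _; exact: HN.
by move=> Hw M; have [N HN] := Hw M; exists N => n Nn; exact: (HN n.+1).
Qed.

(* Escape is a countable intersection-union-intersection of events determined
   by finitely many steps, hence has the Markov property. *)
Lemma markov_escapes x : markov_event (escapes x).
Proof.
rewrite escapesE; apply: markov_event_bigcap => [M|M w [N HN]]; last first.
  exists N => K n Nn nK; rewrite (@lt_trans _ _ M.+1%:R) ?ltr_nat //; exact: HN.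
apply: markov_event_bigcup => [N|N w HN K n Nn nK]; last by apply: HN => //; exact: ltnW.
apply: markov_event_bigcap => [K|K w HK n Nn nK]; last by apply: HK => //; exact: ltnW.
apply: (@markov_event_finite K) => w w' ww' Hw n Nn nK.
by rewrite -(@walk_prefix w) ?Hw // => k kn; apply: ww'; exact: ltn_trans nK.
Qed.

End Walk.

Section Dips.
Variable f : I -> R -> R.

Definition dips_before (x : R) (M N K : nat) (w : nat -> I) : Prop :=
  exists n, [/\ (N <= n)%N, (n < K)%N & (walk f w n x <= M%:R)%R].

Definition dips_after x M N (w : nat -> I) : Prop := exists K, dips_before x M N K w.
Definition dips_often x M (w : nat -> I) : Prop := forall N, dips_after x M N w.

Lemma dips_before_finite x M N K : depends_on K (dips_before x M N K).
Proof.
move=> w w' ww' [n [Nn nK Hn]]; exists n; split => //.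
by rewrite -(@walk_prefix f w) // => k kn; apply: ww'; exact: ltn_trans nK.
Qed.

Lemma dips_before_incr x M N K w : dips_before x M N K w -> dips_before x M N K.+1 w.
Proof. by move=> [n [Nn nK Hn]]; exists n; split => //; exact: ltnW. Qed.

Lemma dips_after_decr x M N w : dips_after x M N.+1 w -> dips_after x M N w.
Proof. by move=> [K [n [Nn nK Hn]]]; exists K, n; split => //; exact: ltnW. Qed.

Lemma markov_dips_after x M N : markov_event (dips_after x M N).
Proof.
apply: (@markov_event_bigcup (dips_before x M N)) => [K|]; last exact: dips_before_incr.
exact: markov_event_finite (@dips_before_finite x M N K).
Qed.

Lemma markov_dips_often x M : markov_event (dips_often x M).
Proof.
apply: (@markov_event_bigcap (dips_after x M)) => [N|]; last exact: dips_after_decr.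
exact: markov_dips_after.
Qed.

Lemma not_escapes x :
  ~` after 0%N (escapes f x) = \bigcup_M after 0%N (dips_often x M).
Proof.
apply/seteqP; split => t; rewrite /after /= !pshift0.
  move=> /escapesP /existsNP [M /forallNP noN]; exists M => // N.
  have /existsNP [n /not_implyP [Nn /negP]] := noN N; rewrite -leNgt => Hn.
  by exists n.+1, n; rewrite pshift0.
move=> [M _ dips] /escapesP /(_ M) [N HN].
have [K [n [Nn _]]] := dips N; rewrite pshift0 => Hn.
by move: (HN n Nn); rewrite ltNge Hn.
Qed.

Section UniformEscape.
Variable eps : R.
Hypothesis eps_gt0 : (0 < eps)%R.
Hypothesis escape_lb : forall y, eps%:E <= P (after 0%N (escapes f y)).

Definition escapes_given (x : R) (D : (nat -> I) -> Prop) : Prop :=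
  eps%:E * P (after 0%N D) <= P (after 0%N (escapes f x) `&` after 0%N D).

(* Conditionally on the first K steps, the walk restarts from walk u K x. *)
Lemma escapes_given_cyl x K u :
  eps%:E * P (cyl K u) <= P (after 0%N (escapes f x) `&` cyl K u).
Proof.
have -> : after 0%N (escapes f x) `&` cyl K u =
          cyl K u `&` after K (escapes f (walk f u K x)).
  rewrite setIC; apply/seteqP; split => t [Hu HE]; split => //; move: HE;
  by rewrite /after /= pshift0 (escapes_shift _ x (path_of t) K)
    (@walk_prefix f (path_of t) u) // => k kK; rewrite /path_of Hu.
rewrite (markov_escapes _ _ K u).2 muleC.
by apply: lee_pmul _ _ _ (escape_lb _) => //; rewrite lee_fin ltW.
Qed.

Lemma escapes_given_finite x K D : depends_on K D -> escapes_given x D.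
Proof.
move=> dD; rewrite /escapes_given -[after 0%N D]setTI -(cyl0 (fun=> i0)).
rewrite (bigcup_piece 0 (fun=> i0) dD) setI_bigcupr.
have mE := markov_event_measurable (markov_escapes f x).
apply: le_measure_bigcup_count; try exact: piece_measurable.
- by move=> u; apply: measurableI => //; exact: piece_measurable.
- exact/trivIset_setIl/piece_trivIset.
- exact: piece_trivIset.
- exact: ltW.
move=> u; rewrite /piece; case: ifP => _; first exact: escapes_given_cyl.
by rewrite measure0 mule0 measure_ge0.
Qed.

Lemma escapes_given_bigcup x (D : nat -> (nat -> I) -> Prop) :
  (forall K, markov_event (D K)) -> (forall K w, D K w -> D K.+1 w) ->
  (forall K, escapes_given x (D K)) -> escapes_given x (fun w => exists K, D K w).
Proof.
move=> mD incD eD.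
have mE := markov_event_measurable (markov_escapes f x).
have mDK K := markov_event_measurable (mD K).
have mED K : measurable (after 0%N (escapes f x) `&` after 0%N (D K)).
  exact: measurableI.
have incDK : nondecreasing_seq (fun K => after 0%N (D K)).
  by apply/nondecreasing_seqP => K; apply/subsetPset => t; exact: incD.
have incED : nondecreasing_seq (fun K => after 0%N (escapes f x) `&` after 0%N (D K)).
  by apply/nondecreasing_seqP => K; apply/subsetPset; apply: setIS => t; exact: incD.
have limD := nondecreasing_cvg_mu (mu := P) mDK (bigcupT_measurable _ mDK) incDK.
have limED := nondecreasing_cvg_mu (mu := P) mED (bigcupT_measurable _ mED) incED.
have limeD : eps%:E * P (after 0%N (D K)) @[K --> \oo] -->
             eps%:E * P (\bigcup_K after 0%N (D K)).
  apply: cvgeM (cvg_cst _) limD.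
  exact/mule_def_fin/fin_num_measure/bigcupT_measurable.
rewrite /escapes_given.
have -> : after 0%N (fun w => exists K, D K w) = \bigcup_K after 0%N (D K).
  by apply/seteqP; split => [t [K HK]|t [K _ HK]]; exists K.
rewrite setI_bigcupr; apply: (lee_cvg_to limeD limED).
by near=> K; exact: eD.
Unshelve. all: by end_near.
Qed.

(* Dipping below M infinitely often is a null event: given a dip after time
   N the walk escapes with probability at least eps, and the events
   "escape and dip after N" decrease to the empty set. *)
Lemma dips_often_null x M : P (after 0%N (dips_often x M)) = 0.
Proof.
have mE := markov_event_measurable (markov_escapes f x).
have mEN N : measurable (after 0%N (escapes f x) `&` after 0%N (dips_after x M N)).
  exact/measurableI/markov_event_measurable/markov_dips_after.
have decEN : nonincreasing_seq
    (fun N => after 0%N (escapes f x) `&` after 0%N (dips_after x M N)).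
  by apply/nonincreasing_seqP => N; apply/subsetPset; apply: setIS => t; exact: dips_after_decr.
have lim0 := nonincreasing_cvg_mu (le_lt_trans (probability_le1 P (mEN 0%N)) (ltry _))
  mEN (bigcapT_measurable mEN) decEN.
have capE : \bigcap_N (after 0%N (escapes f x) `&` after 0%N (dips_after x M N)) = set0.
  apply/seteqP; split => t // Ht; have /escapesP /(_ M) [N HN] := (Ht 0%N Logic.I).1.
  have [K [n [Nn _ Hn]]] := (Ht N Logic.I).2.
  by move: (HN n Nn); rewrite /after pshift0 in Hn *; rewrite ltNge Hn.
rewrite capE measure0 in lim0.
apply/eqP; rewrite eq_le measure_ge0 andbT -(pmule_rle0 _ (_ : 0 < eps%:E)) ?lte_fin //.
apply: (cvge_to_ge lim0); apply: nearW => N /=.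
have escN : escapes_given x (dips_after x M N).
  apply: (@escapes_given_bigcup x (dips_before x M N)) => [K|K|K].
  - exact: markov_event_finite (@dips_before_finite x M N K).
  - exact: dips_before_incr.
  - exact: escapes_given_finite (@dips_before_finite x M N K).
apply: le_trans escN; apply: lee_pmul => //; first by rewrite lee_fin ltW.
apply: le_measure; rewrite ?inE.
- exact: markov_event_measurable (markov_dips_often x M).
- exact: markov_event_measurable (markov_dips_after x M N).
- by move=> t; apply.
Qed.

Lemma escapes_as x : P (after 0%N (escapes f x)) = 1.
Proof.
have mE := markov_event_measurable (markov_escapes f x).
have null : P (~` after 0%N (escapes f x)) = 0.
  rewrite not_escapes; apply/negligibleP.
    by apply: bigcupT_measurable => M; exact: markov_event_measurable (markov_dips_often x M).
  apply: negligible_bigcup => M; apply/negligibleP; last exact: dips_often_null.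
  exact: markov_event_measurable (markov_dips_often x M).
move: null; rewrite probability_setC //.
move: (fin_num_measure P _ mE); case: (P _) => [r||] //= _.
by move/eqP; rewrite -EFinB eqe subr_eq0 => /eqP <-.
Qed.

End UniformEscape.
End Dips.
End MarkovProperty.

Lemma probability_inhabited (d : measure_display) (T : measurableType d)
    (R : realType) (P : probability T R) : inhabited T.
Proof.
apply: contrapT => noT.
have T0 : [set: T] = set0 by apply/seteqP; split => // t; exfalso; exact: noT.
by have := probability_setT P; rewrite T0 measure0 => -[] /eqP; rewrite eq_sym oner_eq0.
Qed.

Lemma phi_plusE d (T : measurableType d) (R : realType) (P : probability T R)
    (I : countType) (f : I -> R -> R) (G : nat -> T -> I) x :
  phi_plus P f G x = P (after G 0%N (escapes f x)).
Proof.
rewrite after0E /phi_plus; congr (P _); apply/seteqP; split => t /=;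
by under eq_fun do rewrite Fwalk_path.
Qed.

Lemma Fwalk_opp (R : realType) (I T : Type) (f : I -> R -> R)
    (G : nat -> T -> I) t n x :
  Fwalk (fun i y => - f i (- y)) G t n x = - Fwalk f G t n (- x).
Proof. by elim: n => [|n IH] /=; rewrite ?opprK // IH opprK. Qed.

Lemma phi_minusE d (T : measurableType d) (R : realType) (P : probability T R)
    (I : countType) (f : I -> R -> R) (G : nat -> T -> I) x :
  phi_minus P f G x = phi_plus P (fun i y => - f i (- y)) G (- x).
Proof.
rewrite /phi_plus /phi_minus; congr (P _); apply/seteqP; split => t /=;
  have -> : (fun n => Fwalk (fun i y => - f i (- y)) G t n (- x)) =
            - (fun n => Fwalk f G t n x)
    by apply/funext => n; rewrite Fwalk_opp opprK.
  by move=> /cvgNry.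
by move/cvgNry.
Qed.

Theorem proposition1 (d : measure_display) (T : measurableType d)
    (R : realType) (P : probability T R)
    (I : countType) (f : I -> R -> R) (p : I -> R) (G : nat -> T -> I) :
  (forall i, homeo_plus (f i)) ->
  (forall i, 0 < p i) ->
  (\esum_(i in [set: I]) (p i)%:E = 1)%E ->
  iid_with_law P p G ->
  ((exists eps : R, 0 < eps /\ forall x : R, (eps%:E <= phi_plus P f G x)%E) ->
     forall x : R, phi_plus P f G x = 1%E) /\
  ((exists eps : R, 0 < eps /\ forall x : R, (eps%:E <= phi_minus P f G x)%E) ->
     forall x : R, phi_minus P f G x = 1%E).
Proof.
move=> _ _ _ iidG; have [t] := probability_inhabited P; pose i0 := G 0%N t.
split=> -[eps [eps_gt0 lb]] x.
  rewrite phi_plusE; apply: (escapes_as iidG i0 eps_gt0) => y.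
  by rewrite -phi_plusE.
rewrite phi_minusE phi_plusE; apply: (escapes_as iidG i0 eps_gt0) => y.
by rewrite -phi_plusE -(opprK y) -phi_minusE.
Qed.
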